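(* Let $n>1$ be an integer and $S=S_1\cup S_2\subseteq U_{6n}$ with $S_1=\langle a^2\rangle\setminus\{1\}$ and $S_2=\{a^{2r+1},\ a^{2r+1}b\mid 0\le r\le n-1\}$. Then $\mathrm{Cay}(U_{6n},S)$ is a connected integral graph whose spectrum (eigenvalues with multiplicities) is $\{[-n-1]^1,[-1]^{6n-4},[2n-1]^2,[3n-1]^1\}$.
   Context: For an integer $n\ge1$, $U_{6n}=\langle a,b\mid a^{2n}=b^3=1,\ a^{-1}ba=b^{-1}\rangle$, a group of order $6n$. For a group $G$ and $S\subseteq G$ with $1\notin S=S^{-1}$, the Cayley graph $\mathrm{Cay}(G,S)$ has vertex set $G$ and edges $\{g,sg\}$ for $g\in G,s\in S$. A graph is integral if all eigenvalues of its adjacency matrix are integers. $[\lambda]^m$ denotes eigenvalue $\lambda$ with multiplicity $m$. *)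

From mathcomp Require Import all_boot all_order all_algebra all_fingroup all_field.
Set Implicit Arguments. Unset Strict Implicit. Unset Printing Implicit Defensive.
Import GRing.Theory Num.Theory.
Local Open Scope ring_scope.

Definition cay_rel (gT : finGroupType) (S : {set gT}) : rel gT :=
  fun g h => (h * g^-1)%g \in S.

Definition cay_adj (gT : finGroupType) (S : {set gT}) : 'M[algC]_#|gT| :=
  \matrix_(i, j) ((cay_rel S (enum_val i) (enum_val j) : bool)%:R).

Definition cay_connected (gT : finGroupType) (S : {set gT}) : Prop :=
  forall g h : gT, connect (cay_rel S) g h.

Definition integral_mx (m : nat) (A : 'M[algC]_m) : Prop :=
  forall l : algC, eigenvalue A l -> l \is a Num.int.

From mathcomp Require Import all_boot all_order all_algebra all_fingroup all_field.
From mathcomp Require Import ring zify.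
Import GRing.Theory Num.Theory.
Set Implicit Arguments. Unset Strict Implicit. Unset Printing Implicit Defensive.

(* Since a^-1 b a = b^-1, the element a^2 is central, and S :|: [set 1] is the
   union of the cosets of <[a^2]> through 1, a and ab.  The quotient by <[a^2]>
   is S_3, and its Cayley graph for the two involutions a, ab is a hexagon.  So
   A + I = C M C^T, where C is the 6n x 6 incidence matrix of the cosets and M
   the hexagon adjacency matrix with loops.  As C^T C = n, Sylvester's
   determinant identity gives det (x - A) = (x + 1)^(6n-6) det ((x + 1) - n M),
   and M has eigenvalues 3, 2, 2, 0, 0, -1. *)

Definition cycle6_closed_adj (i j : 'I_6) : bool := (j + 6 - i) %% 6 \in [:: 0; 1; 5].

Lemma cycle6_closed_adj_refl i : cycle6_closed_adj i i.
Proof. by rewrite /cycle6_closed_adj addKn modnn. Qed.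

Definition twist (p : bool) : nat := if p then 2 else 1.

(* [a^i b^j] sits at position [hex_pos (odd i) j] of the hexagon
   Cay(U_6n / <a^2>, {a, ab}). *)
Definition hex_pos (p : bool) (j : nat) : 'I_6 := inZp (2 * j + 5 * p).

Lemma cycle6_closed_adj_hex_pos (p q : bool) (e j : nat) : e < 3 -> j < 3 ->
  cycle6_closed_adj (hex_pos p j) (hex_pos (q (+) p) ((e * twist p + j) %% 3))
    = (e == 0) || (e == 1) && q.
Proof.
by case: e => [|[|[|e]]] // _; case: j => [|[|[|j]]] // _; case: p; case: q.
Qed.

Lemma sum_hex_pos_eq p (c : 'I_6) : \sum_(j < 3 | hex_pos p j == c) 1 = (p == odd c).
Proof.
rewrite big_mkcond !big_ord_recl big_ord0.
by case: p; case: c => -[|[|[|[|[|[|c]]]]]].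
Qed.

Lemma sum_odd_eq (q : bool) n : \sum_(i < 2 * n) (odd i == q) = n.
Proof.
rewrite -(big_mkord xpredT (fun i => (odd i == q) : nat)).
elim: n => [|n IHn]; first by rewrite big_geq.
rewrite mulnSr addn2 !big_nat_recr //= IHn oddM /=.
by case: q {IHn} => /=; lia.
Qed.

Lemma connect_cay_mulg (gT : finGroupType) (S : {set gT}) (x y k : gT) :
  connect (cay_rel S) x y -> connect (cay_rel S) (x * k)%g (y * k)%g.
Proof.
move=> /connectP[p xp ->]; apply/connectP; exists (map (fun z => z * k)%g p).
  elim: p x xp => [|z p IHp] x //= /andP[xz zp]; rewrite IHp // andbT.
  by move: xz; rewrite /cay_rel invMg mulgA mulgK.
by rewrite (last_map (fun z => z * k)%g).
Qed.

Lemma cay_connected_gen (gT : finGroupType) (S A : {set gT}) :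
  <<A>>%g = [set: gT] -> (forall x, x \in A -> connect (cay_rel S) 1%g x) ->
  cay_connected S.
Proof.
move=> genA connA g h.
pose X := [set x | connect (cay_rel S) 1%g x].
have groupX : group_set X.
  apply/group_setP; split=> [|x y]; rewrite !inE ?connect0 // => c1x c1y.
  by apply: connect_trans c1y _; rewrite -{1}(mul1g y); exact: connect_cay_mulg.
have sAX : A \subset X by apply/subsetP => x /connA; rewrite inE.
have := gen_subG A (Group groupX); rewrite sAX genA.
move=> /subsetP/(_ (h * g^-1)%g (in_setT _)); rewrite inE.
by move=> /(connect_cay_mulg g); rewrite mul1g mulgKV.
Qed.

Local Open Scope ring_scope.

Lemma det_scalar_sub_mulmxC (R : idomainType) m k (t : R)
    (U : 'M[R]_(m, k)) (W : 'M[R]_(k, m)) :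
  (k <= m)%N -> t != 0 ->
  \det (t%:M - U *m W) = t ^+ (m - k) * \det (t%:M - W *m U).
Proof.
move=> le_km t_neq0.
pose B := block_mx (t%:M : 'M_m) U W (1%:M : 'M_k).
have detBl : \det B = \det (t%:M - U *m W).
  have := congr1 determinant (_ : block_mx 1%:M (-U) 0 1%:M *m B
                                  = block_mx (t%:M - U *m W) 0 W 1%:M).
  rewrite det_mulmx det_ublock det_lblock !det1 !mul1r mulr1; apply.
  rewrite mulmx_block !mul_scalar_mx !scale1r !mul0mx !add0r mul_mx_scalar scale1r.
  by rewrite mulNmx addrN.
have detBr : \det B * t ^+ k = t ^+ m * \det (t%:M - W *m U).
  have := congr1 determinant (_ : B *m block_mx 1%:M (-U) 0 t%:M
                                  = block_mx t%:M 0 W (t%:M - W *m U)).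
  rewrite det_mulmx det_ublock det_lblock !det1 mul1r !det_scalar; apply.
  rewrite mulmx_block !mulmx0 !addr0 mulmxN !mul_scalar_mx !mul_mx_scalar !scale1r.
  by rewrite addNr mulmxN addrC scalemx1.
apply: (mulIf (expf_neq0 k t_neq0)).
by rewrite -detBl detBr -mulrA [_ * t ^+ k]mulrC mulrA -exprD subnK.
Qed.

Lemma sum_delta_mulr (R : pzSemiRingType) (I : finType) (x : I) (F : I -> R) :
  \sum_y (x == y)%:R * F y = F x.
Proof.
rewrite (bigD1 x) //= eqxx mul1r big1 ?addr0 // => y.
by rewrite eq_sym => /negbTE ->; rewrite mul0r.
Qed.

Lemma char_poly_blowup (R : idomainType) N k n (cls : 'I_N -> 'I_k)
    (M : 'M[R]_k) (A : 'M[R]_N) :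
  (k <= N)%N -> (forall c, #|[set i | cls i == c]| = n) ->
  (forall i j, A i j = M (cls i) (cls j) - (i == j)%:R) ->
  char_poly A = ('X + 1) ^+ (N - k) * \det (('X + 1)%:M - n%:R *: map_mx polyC M).
Proof.
move=> le_kN card_fiber defA.
pose C : 'M[{poly R}]_(N, k) := \matrix_(i, c) (cls i == c)%:R.
have X1_neq0 : 'X + 1 != 0 :> {poly R}.
  by rewrite -size_poly_eq0 -polyC1 size_XaddC.
have defAX : char_poly_mx A = ('X + 1)%:M - C *m map_mx polyC M *m C^T.
  apply/matrixP => i j; rewrite !mxE.
  under eq_bigr => d _ do rewrite !mxE.
  under eq_bigr => d _ do (under eq_bigr => c _ do rewrite !mxE).
  under eq_bigr => d _ do rewrite sum_delta_mulr.
  rewrite (eq_bigr _ (fun d _ => mulrC _ _)) sum_delta_mulr defA rmorphB /=.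
  by case: (i == j); rewrite ?mulr1n ?mulr0n ?polyC1 ?polyC0; ring.
have CtC : C^T *m C = n%:R%:M.
  apply/matrixP => c d; rewrite !mxE.
  under eq_bigr => i _ do rewrite !mxE -natrM mulnb.
  rewrite -natr_sum; have [<- | neq_cd] := eqVneq c d.
    under eq_bigr => i _ do rewrite andbb.
    rewrite mulr1n -(card_fiber c) -sum1dep_card.
    by congr (_%:R); rewrite [RHS]big_mkcond; apply: eq_bigr => i _; case: eqP.
  by rewrite big1 // => i _; case: eqP => // ->; rewrite (negbTE neq_cd) andbF.
by rewrite /char_poly defAX det_scalar_sub_mulmxC // mulmxA CtC mul_scalar_mx.
Qed.

Definition cycle6_mx : 'M[int]_6 := \matrix_(i, j) (cycle6_closed_adj i j : int).

(* Real eigenvectors of the circulant [cycle6_mx]; the eigenvalues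
   [1 + 2 cos (2 pi k / 6)] are 3, -1, 2, 2, 0, 0. *)
Definition cycle6_eigvecs : 'M[int]_6 := \matrix_(i, j) nth 0 (nth [::]
  [:: [:: 1; 1; 1; 1; 1; 1]; [:: 1; -1; 1; -1; 1; -1]; [:: 2; 1; -1; -2; -1; 1];
      [:: 0; 1; 1; 0; -1; -1]; [:: 2; -1; -1; 2; -1; -1]; [:: 0; 1; -1; 0; 1; -1]] i) j.

Definition cycle6_eigvals : seq int := [:: 3; -1; 2; 2; 0; 0].

Lemma cycle6_eigvecsM :
  cycle6_eigvecs *m cycle6_mx = diag_mx (\row_i nth 0 cycle6_eigvals i) *m cycle6_eigvecs.
Proof.
apply/matrixP => i j; rewrite !mxE !big_ord_recl !big_ord0 !mxE.
by case: i => -[|[|[|[|[|[|i]]]]]] ? //; case: j => -[|[|[|[|[|[|j]]]]]] ?.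
Qed.

Lemma cycle6_eigvecs_mul_tr :
  cycle6_eigvecs *m cycle6_eigvecs^T = diag_mx (\row_i nth 0 [:: 6; 6; 12; 4; 12; 4] i).
Proof.
apply/matrixP => i j; rewrite !mxE !big_ord_recl !big_ord0 !mxE.
by case: i => -[|[|[|[|[|[|i]]]]]] ? //; case: j => -[|[|[|[|[|[|j]]]]]] ?.
Qed.

Lemma det_cycle6_eigvecs_neq0 : \det cycle6_eigvecs != 0.
Proof.
apply/eqP => det0; have := congr1 determinant cycle6_eigvecs_mul_tr.
by rewrite det_mulmx det_tr det0 mul0r det_diag !big_ord_recl big_ord0 !mxE.
Qed.

Lemma det_cycle6_pencil (F : numDomainType) (t c : {poly F}) :
  \det (t%:M - c *: map_mx intr cycle6_mx)
    = (t - c *+ 3) * (t + c) * (t - c *+ 2) ^+ 2 * t ^+ 2.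
Proof.
pose V := map_mx (intr : int -> {poly F}) cycle6_eigvecs.
pose D : 'M[{poly F}]_6 := map_mx intr (diag_mx (\row_i nth 0 cycle6_eigvals i)).
have detV_neq0 : \det V != 0.
  have -> : \det V = ((\det cycle6_eigvecs)%:~R : F)%:P by rewrite det_map_mx rmorph_int.
  by rewrite polyC_eq0 intr_eq0 det_cycle6_eigvecs_neq0.
have VM : V *m (t%:M - c *: map_mx intr cycle6_mx) = (t%:M - c *: D) *m V.
  rewrite mulmxBr mulmxBl -scalemxAr -map_mxM cycle6_eigvecsM map_mxM scalemxAl.
  by rewrite mul_mx_scalar mul_scalar_mx.
have := congr1 determinant VM; rewrite !det_mulmx mulrC => /(mulIf detV_neq0) ->.
have -> : t%:M - c *: D = diag_mx (\row_i (t - c * (nth 0 cycle6_eigvals i)%:~R)).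
  apply/matrixP => i j; rewrite !mxE; case: (i == j).
    by rewrite mulr1n.
  by rewrite mulr0n mulr0 subr0.
rewrite det_diag !big_ord_recl big_ord0 !mxE /=.
by rewrite !mulr0 !subr0 mulr1; ring.
Qed.

Lemma spectrum_factorization (R : comNzRingType) n : (0 < n)%N ->
  ('X + 1) ^+ (6 * n - 6)
    * (('X + 1 - n%:R *+ 3) * ('X + 1 + n%:R) * ('X + 1 - n%:R *+ 2) ^+ 2 * ('X + 1) ^+ 2)
  = ('X - (- (n%:Z + 1))%:~R%:P) * ('X - (-1)%:~R%:P) ^+ (6 * n - 4)
    * ('X - (2 * n%:Z - 1)%:~R%:P) ^+ 2 * ('X - (3 * n%:Z - 1)%:~R%:P) :> {poly R}.
Proof.
move=> n_gt0; rewrite (_ : 6 * n - 4 = 6 * n - 6 + 2)%N; last by lia.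
have -> : 'X - (-1)%:~R%:P = 'X + 1 :> {poly R} by ring.
by rewrite exprD; move: (('X + 1) ^+ (6 * n - 6)) => P; ring.
Qed.

Local Close Scope ring_scope.

Section U6n.

Local Open Scope group_scope.

Variables (n : nat) (gT : finGroupType) (a b : gT).
Hypotheses (n_gt0 : (0 < n)%N) (gen_ab : <<[set a; b]>> = [set: gT])
  (expa2n : a ^+ (2 * n) = 1) (expb3 : b ^+ 3 = 1) (conj_ba : a^-1 * b * a = b^-1)
  (card_gT : #|gT| = (6 * n)%N).

Definition conn_set : {set gT} :=
  (<[a ^+ 2]> :\ 1) :|: ([set a ^+ (2 * r + 1) | r : 'I_n]
                         :|: [set a ^+ (2 * r + 1) * b | r : 'I_n]).

Definition nf (i j : nat) : gT := a ^+ i * b ^+ j.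

Lemma nf_mod i j : nf i j = nf (i %% (2 * n)) (j %% 3).
Proof. by rewrite /nf !expg_mod. Qed.

Lemma nf0 : nf 0 0 = 1.
Proof. by rewrite /nf !expg0 mulg1. Qed.

Lemma conjb_expa i : b ^ (a ^+ i) = b ^+ twist (odd i).
Proof.
have conjb_a : b ^ a = b ^+ 2.
  by rewrite /conjg mulgA conj_ba; apply/eqP; rewrite eq_invg_mul -expgS expb3.
elim: i => [|i IHi]; first by rewrite conjg1 expg1.
rewrite expgSr conjgM IHi conjXg conjb_a -expgM.
by rewrite oddS; case: (odd i) => //=; rewrite -[in LHS](expg_mod _ expb3).
Qed.

Lemma nfM k l i j : nf k l * nf i j = nf (k + i) (l * twist (odd i) + j).
Proof.
rewrite /nf mulgA -(mulgA _ (b ^+ l)) [b ^+ l * _]conjgC conjXg conjb_expa.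
by rewrite -expgM mulnC !expgD !mulgA.
Qed.

Definition nf_pair (p : 'I_(2 * n) * 'I_3) : gT := nf p.1 p.2.

Lemma nfp_surj g : exists p, g = nf_pair p.
Proof.
have lt0_2n : (0 < 2 * n)%N by rewrite muln_gt0.
pose X := [set nf_pair p | p in [set: 'I_(2 * n) * 'I_3]].
have nf_in_X i j : nf i j \in X.
  apply/imsetP; exists (Ordinal (ltn_pmod i lt0_2n), Ordinal (ltn_pmod j (isT : (0 < 3)%N))).
    by [].
  exact: nf_mod.
have groupX : group_set X.
  apply/group_setP; split=> [|_ _ /imsetP[p _ ->] /imsetP[q _ ->]].
    by rewrite -nf0.
  by rewrite /nf_pair nfM.
have sabX : [set a; b] \subset X.
  apply/subsetP => x /set2P[] ->.
    by have := nf_in_X 1%N 0%N; rewrite /nf expg1 expg0 mulg1.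
  by have := nf_in_X 0%N 1%N; rewrite /nf expg1 expg0 mul1g.
have := gen_subG [set a; b] (Group groupX); rewrite sabX gen_ab.
by move=> /subsetP/(_ g (in_setT _))/imsetP[p _ ->]; exists p.
Qed.

Lemma nfp_bij : bijective nf_pair.
Proof.
have imset_nfp : nf_pair @: [set: 'I_(2 * n) * 'I_3] = [set: gT].
  by apply/setP => g; rewrite inE; have [p ->] := nfp_surj g; apply: imset_f.
have /imset_injP inj_nfp : #|nf_pair @: [set: 'I_(2 * n) * 'I_3]| == #|[set: 'I_(2 * n) * 'I_3]|.
  by rewrite imset_nfp !cardsT card_gT card_prod !card_ord; apply/eqP; lia.
apply: inj_card_bij => [p q|]; first by apply: inj_nfp; rewrite inE.
by rewrite card_gT card_prod !card_ord; lia.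
Qed.

Lemma eq_nf i j k l : (nf i j == nf k l) = (i == k %[mod 2 * n]) && (j == l %[mod 3]).
Proof.
have lt0_2n : (0 < 2 * n)%N by rewrite muln_gt0.
pose ord_mod i j : 'I_(2 * n) * 'I_3 :=
  (Ordinal (ltn_pmod i lt0_2n), Ordinal (ltn_pmod j (isT : (0 < 3)%N))).
rewrite (nf_mod i j) (nf_mod k l) -[nf (i %% _) _]/(nf_pair (ord_mod i j)).
by rewrite -[nf (k %% _) _]/(nf_pair (ord_mod k l)) (bij_eq nfp_bij) xpair_eqE.
Qed.

Definition hex_class (g : gT) : 'I_6 :=
  if [pick p | nf_pair p == g] is Some p then hex_pos (odd p.1) p.2 else ord0.

Lemma hex_class_nf i j : hex_class (nf i j) = hex_pos (odd i) (j %% 3).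
Proof.
rewrite /hex_class; case: pickP => [p | no_p]; last first.
  by have [p def_p] := nfp_surj (nf i j); have := no_p p; rewrite -def_p eqxx.
rewrite eq_nf => /andP[/eqP i_mod /eqP j_mod].
have even_2n : odd (2 * n) = false by rewrite oddM.
by rewrite -(odd_mod i even_2n) -i_mod -j_mod !modn_small.
Qed.

Lemma mem_conn_set m e : (m < 2 * n)%N -> (e < 3)%N ->
  (nf m e \in conn_set) = (e == 0%N) && (m != 0%N) || (e == 1%N) && odd m.
Proof.
move=> lt_m lt_e.
have eq_nf_small k l : (nf m e == nf k l) = (m == k %% (2 * n)) && (e == l %% 3).
  by rewrite eq_nf (modn_small lt_m) (modn_small lt_e).
have expa_nf k : a ^+ k = nf k 0 by rewrite /nf expg0 mulg1.
have odd_mod2n k : odd (k %% (2 * n)) = odd k by rewrite odd_mod // oddM.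
have half_m : m = (2 * m./2 + odd m)%N by rewrite mul2n addnC odd_double_half.
have in_a2 : (nf m e \in <[a ^+ 2]>) = (e == 0%N) && ~~ odd m.
  apply/cycleP/andP => [[r /eqP] | [/eqP e0 even_m]].
    by rewrite -expgM expa_nf eq_nf_small => /andP[/eqP-> ->]; rewrite odd_mod2n oddM.
  by exists m./2; rewrite -expgM expa_nf e0 {1}half_m (negbTE even_m) addn0.
have in_odd l : (nf m e \in [set nf (2 * r + 1) l | r : 'I_n]) = (e == l %% 3) && odd m.
  apply/imsetP/andP => [[r _ /eqP] | [/eqP e_l odd_m]].
    by rewrite eq_nf_small => /andP[/eqP-> ->]; rewrite odd_mod2n oddD oddM.
  have def_m : (2 * m./2 + 1)%N = m by rewrite [RHS]half_m odd_m.
  have lt_half : (m./2 < n)%N by move: lt_m; rewrite -def_m; lia.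
  exists (Ordinal lt_half) => //; apply/eqP.
  by rewrite eq_nf_small /= def_m (modn_small lt_m) e_l !eqxx.
rewrite /conn_set.
have -> : [set a ^+ (2 * r + 1) | r : 'I_n] = [set nf (2 * r + 1) 0 | r : 'I_n].
  by apply: eq_imset => r; rewrite expa_nf.
have -> : [set a ^+ (2 * r + 1) * b | r : 'I_n] = [set nf (2 * r + 1) 1 | r : 'I_n].
  by apply: eq_imset => r; rewrite /nf expg1.
rewrite !inE in_a2 !in_odd -nf0 eq_nf_small !mod0n.
by clear -lt_e; case: e lt_e => [|[|[|e]]] //= _; case: m => [|m] //=; case: (odd m).
Qed.

Lemma cay_rel_conn_set g h :
  cay_rel conn_set g h = cycle6_closed_adj (hex_class g) (hex_class h) && (g != h).
Proof.
have [[i j] ->] := nfp_surj g; have [[m e] def_hg] := nfp_surj (h * (nf_pair (i, j))^-1).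
have {h def_hg}-> : h = nf m e * nf i j by rewrite -[nf m e]def_hg mulgKV.
rewrite /cay_rel /nf_pair /= mulgK mem_conn_set //.
rewrite -[X in X != _ * _]mul1g (inj_eq (mulIg _)) [1 == _]eq_sym -nf0 eq_nf !mod0n !modn_small //.
rewrite nfM !hex_class_nf (modn_small (ltn_ord j)) oddD cycle6_closed_adj_hex_pos //.
by case: e => -[|[|[|e]]] //= _; case: m => -[|m] ?; rewrite /= ?andbT.
Qed.

Lemma card_hex_class c : #|[set g | hex_class g == c]| = n.
Proof.
rewrite -(on_card_preimset (onW_bij _ nfp_bij)).
have -> : nf_pair @^-1: [set g | hex_class g == c]
          = [set p : 'I_(2 * n) * 'I_3 | hex_pos (odd p.1) p.2 == c].
  by apply/setP => p; rewrite !inE /nf_pair hex_class_nf modn_small.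
transitivity (\sum_(i < 2 * n) \sum_(j < 3 | hex_pos (odd i) j == c) 1)%N.
  by rewrite pair_big_dep -sum1dep_card.
under eq_bigr => i _ do rewrite sum_hex_pos_eq.
exact: sum_odd_eq.
Qed.

Lemma cay_connected_conn_set : cay_connected conn_set.
Proof.
have edge1 x : cay_rel conn_set 1 x = (x \in conn_set) by rewrite /cay_rel invg1 mulg1.
have a_in_S : a \in conn_set.
  by rewrite -[a]expg1 -[_ ^+ 1]mulg1 -(expg0 b) mem_conn_set //; lia.
apply: (cay_connected_gen gen_ab) => _ /set2P[]->; first by rewrite connect1 ?edge1.
have ab_in_S : a * b \in conn_set by rewrite -[a]expg1 -[b]expg1 mem_conn_set //; lia.
apply: (connect_trans (connect1 _ : connect _ 1 (a * b))); first by rewrite edge1.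
apply: connect1; rewrite /cay_rel invMg mulgA mulgV mul1g.
have -> : a^-1 = nf (2 * n).-1 0.
  by apply/eqP; rewrite /nf expg0 mulg1 eq_invg_mul -expgS prednK ?expa2n // muln_gt0.
by rewrite mem_conn_set //; lia.
Qed.

Local Open Scope ring_scope.

Lemma char_poly_cay_adj_conn_set :
  char_poly (cay_adj conn_set) = ('X + 1) ^+ (6 * n - 6)%N
    * (('X + 1 - n%:R *+ 3) * ('X + 1 + n%:R) * ('X + 1 - n%:R *+ 2) ^+ 2 * ('X + 1) ^+ 2).
Proof.
pose cls (i : 'I_#|gT|) := hex_class (enum_val i).
have adjE i j : cay_adj conn_set i j = map_mx intr cycle6_mx (cls i) (cls j) - (i == j)%:R.
  rewrite !mxE cay_rel_conn_set (inj_eq enum_val_inj).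
  case: eqP => [->|_]; first by rewrite cycle6_closed_adj_refl subrr.
  by rewrite andbT subr0; case: cycle6_closed_adj.
have card_fiber c : #|[set i | cls i == c]| = n.
  rewrite -(card_hex_class c) -(card_imset _ enum_val_inj); apply: eq_card => g.
  rewrite inE; apply/imsetP/idP => [[i] | cls_g]; first by rewrite inE => /[swap] ->.
  by exists (enum_rank g); rewrite ?inE /cls enum_rankK.
(* The [#|gT|] indexing [cay_adj] is elaborated through another coercion path
   than the one in [card_gT], so [rewrite card_gT] does not find it. *)
have le_6_6n : (6 <= 6 * n)%N by rewrite leq_pmulr.
rewrite (char_poly_blowup _ card_fiber adjE); last exact: leq_trans le_6_6n (eq_leq (esym card_gT)).
rewrite [X in _ ^+ X](_ : _ = 6 * n - 6)%N; last by rewrite -card_gT.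
have -> : map_mx polyC (map_mx intr cycle6_mx) = map_mx intr cycle6_mx :> 'M[{poly algC}]_6.
  by apply/matrixP => i j; rewrite !mxE rmorph_int.
by rewrite det_cycle6_pencil.
Qed.

End U6n.

Local Open Scope ring_scope.

Unset Implicit Arguments.

Theorem corollary4p2 (n : nat) (gT : finGroupType) (a b : gT) :
  (1 < n)%N ->
  (<<[set a; b]>> = [set: gT])%g ->
  (a ^+ (2 * n) = 1)%g -> (b ^+ 3 = 1)%g -> (a^-1 * b * a = b^-1)%g ->
  #|gT| = (6 * n)%N ->
  let S1 : {set gT} := (<[a ^+ 2]> :\ 1)%g in
  let S2 : {set gT} := ([set (a ^+ (2 * r + 1))%g | r : 'I_n]
                        :|: [set (a ^+ (2 * r + 1) * b)%g | r : 'I_n]) in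
  let S := S1 :|: S2 in
  cay_connected S /\ integral_mx (cay_adj S) /\
  char_poly (cay_adj S) =
    ('X - (- (n%:Z + 1))%:~R%:P)
    * ('X - (-1)%:~R%:P) ^+ (6 * n - 4)
    * ('X - (2 * n%:Z - 1)%:~R%:P) ^+ 2
    * ('X - (3 * n%:Z - 1)%:~R%:P).
Proof.
move=> n_gt1 gen_ab expa2n expb3 conj_ba card_gT S1 S2 S.
have n_gt0 : (0 < n)%N := ltnW n_gt1.
have charE := etrans (char_poly_cay_adj_conn_set n_gt0 gen_ab expa2n expb3 conj_ba card_gT)
                     (spectrum_factorization algC n_gt0).
split; first exact: (cay_connected_conn_set n_gt0 gen_ab expa2n expb3 conj_ba card_gT).
split; last exact: charE.
move=> l; rewrite eigenvalue_root_char charE !rootM.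
rewrite (_ : 6 * n - 4 = (6 * n - 5).+1)%N; last by lia.
rewrite root_exp_XsubC !root_XsubC.
by case/orP=> [/orP[/orP[] | /orP[]] | ] /eqP ->; apply: intr_int.
Qed.
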